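(* Let $G$ be a finite ordered graph and let $k$ be the largest integer such that $G$ contains the ordered matching $M_k$ as an (not necessarily induced) ordered subgraph, i.e. there are vertices $a_1<_G b_1<_G a_2<_G b_2<_G\dots<_G a_k<_G b_k$ with $\{a_i,b_i\}\in E(G)$ for all $i$. Then $\chi(G)\le 2k+1$.
   Context: An ordered graph is a triple $G=(V,E,\le_G)$ where $(V,E)$ is a finite simple undirected graph and $\le_G$ is a linear order on $V$. The ordered matching $M_k$ has vertices $a_1<b_1<\dots<a_k<b_k$ and edges $\{a_i,b_i\}$. The ordered chromatic number $\chi(G)$ is the minimum number of sets in a partition of $V$ into sets that are consecutive in $\le_G$ and span no edge of $G$. *)

From mathcomp Require Import all_boot.
Set Implicit Arguments. Unset Strict Implicit. Unset Printing Implicit Defensive.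

(* An ordered graph on n vertices: vertex set 'I_n with its natural linear
   order, and a symmetric irreflexive edge relation e. *)
Definition simple_graph (n : nat) (e : rel 'I_n) : Prop :=
  (forall u v, e u v = e v u) /\ (forall u, ~~ e u u).

Definition contains_matching (n : nat) (e : rel 'I_n) (k : nat) : Prop :=
  exists (a b : 'I_k -> 'I_n),
    (forall i, a i < b i /\ e (a i) (b i)) /\
    (forall i j : 'I_k, i < j -> b i < a j).

(* A partition of the vertices into at most m consecutive independent sets,
   encoded by a nondecreasing labelling c : V -> 'I_m whose classes are
   independent (classes of a monotone labelling are exactly intervals). *)
Definition ord_colorable (n : nat) (e : rel 'I_n) (m : nat) : bool :=
  [exists c : {ffun 'I_n -> 'I_m},
     [forall u : 'I_n, forall v : 'I_n, ((u <= v) ==> (c u <= c v)) && (e u v ==> (c u != c v))]].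

(* Ordered chromatic number: least m admitting such a partition
   (m = n always works for irreflexive e). *)
Definition ord_chi (n : nat) (e : rel 'I_n) : nat :=
  \big[minn/n]_(m < n.+1 | ord_colorable e m) m.

(* Colour greedily from the left.  Let t be the least vertex that is the right
   end of an edge {x, t} with x < t.  The vertices before t span no edge, so
   they form one class, {t} forms a second one, and the vertices after t
   cannot contain M_k (otherwise {x, t} would extend it to M_(k+1)), so by
   induction they split into 2k - 1 consecutive independent classes. *)
From mathcomp Require Import all_boot order zify.
Set Implicit Arguments. Unset Strict Implicit. Unset Printing Implicit Defensive.
Import Order.TTheory.

Section IntervalColoring.

Variables (r : rel nat) (n : nat).

Definition interval_indep (s t : nat) : Prop :=
  forall u v, s <= u -> u < v -> v < t -> ~~ r u v.

Definition matching_in (s j : nat) : Prop :=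
  exists a b : nat -> nat,
    (forall i, i < j -> [/\ s <= a i, a i < b i, b i < n & r (a i) (b i)]) /\
    (forall i i', i < i' -> i' < j -> b i < a i').

Definition interval_coloring (s m : nat) (f : nat -> nat) : Prop :=
  [/\ forall u v, s <= u -> u <= v -> v < n -> f u <= f v,
      forall u v, s <= u -> u < v -> v < n -> r u v -> f u != f v
    & forall u, f u < m].

Lemma indep_or_first_edge (s : nat) :
  interval_indep s n \/
  exists x t, [/\ s <= x, x < t, t < n, r x t & interval_indep s t].
Proof.
pose P t := has (r^~ t) (index_iota s t).
have indep_below t : (forall v, v < t -> ~~ P v) -> interval_indep s t.
  move=> noP u v su uv vt; apply: contraNN (noP v vt) => ruv.
  by apply/hasP; exists u; rewrite ?mem_index_iota ?su.
have [/hasP[t0 + Pt0] | noP] := boolP (has P (iota 0 n)).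
  rewrite mem_iota add0n => t0n.
  have [t /hasP[x + rxt] t_min] := ex_minnP (ex_intro P t0 Pt0).
  rewrite mem_index_iota => /andP[sx xt].
  right; exists x, t; split => //; first exact: leq_ltn_trans (t_min t0 Pt0) t0n.
  by apply: indep_below => v vt; apply: contraTN vt => /t_min; rewrite -leqNgt.
left; apply: indep_below => v vn.
by apply: (hasPn noP); rewrite mem_iota add0n.
Qed.

Lemma matching_in0 (s : nat) : matching_in s 0.
Proof. by exists id, id; split. Qed.

Lemma matching_in_cons (s x t j : nat) :
  s <= x -> x < t -> t < n -> r x t -> matching_in t.+1 j -> matching_in s j.+1.
Proof.
move=> sx xt tn rxt [a [b [ab_edge ab_sorted]]].
exists (fun i => if i is i.+1 then a i else x), (fun i => if i is i.+1 then b i else t).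
split=> [[|i] //= | [|i] [|i'] //= ii' /ltnSE i'j].
- by case/ab_edge=> ta ab bn rab; split=> //; lia.
- by case: (ab_edge i' i'j) => ta _ _ _; exact: leq_trans ta.
- exact: ab_sorted.
Qed.

Lemma interval_coloring_indep (s m : nat) :
  interval_indep s n -> interval_coloring s m.+1 (fun=> 0).
Proof. by move=> indep; split=> // u v su uv vn; rewrite (negbTE (indep u v su uv vn)). Qed.

Lemma interval_coloring_stack (s t m : nat) (g : nat -> nat) :
  interval_indep s t -> interval_coloring t.+1 m g ->
  interval_coloring s m.+2
    (fun u => if u < t then 0 else if u == t then 1 else (g u).+2).
Proof.
move=> indep [g_mono g_proper g_lt]; split.
- move=> u v su uv vn; case: (ltngtP u t) => ut; case: (ltngtP v t) => vt //; try lia.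
  exact: g_mono.
- move=> u v su uv vn ruv; case: (ltngtP u t) => ut; case: (ltngtP v t) => vt //; try lia.
  + by move: ruv; rewrite (negbTE (indep u v su uv vt)).
  + by rewrite eqSS; exact: g_proper.
- by move=> u; case: (ltngtP u t) => _ //; rewrite !ltnS.
Qed.

Lemma interval_coloring_of_no_matching (j s : nat) :
  ~ matching_in s j.+1 -> exists f, interval_coloring s (2 * j).+1 f.
Proof.
elim: j s => [|j IH] s noM;
  have [indep|[x [t [sx xt tn rxt indep]]]] := indep_or_first_edge s;
  try by exists (fun=> 0); exact: interval_coloring_indep.
- by case: noM; exact: matching_in_cons sx xt tn rxt (matching_in0 _).
- have [g g_col] := IH t.+1 (fun M => noM (matching_in_cons sx xt tn rxt M)).
  exists (fun u => if u < t then 0 else if u == t then 1 else (g u).+2).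
  by rewrite mulnS; exact: interval_coloring_stack.
Qed.

End IntervalColoring.

Section OrderedGraph.

Variables (n : nat) (e : rel 'I_n).

Definition nat_rel : rel nat := fun u v =>
  if (insub u, insub v) is (Some u', Some v') then e u' v' else false.

Lemma nat_relE (u v : 'I_n) : nat_rel u v = e u v.
Proof. by rewrite /nat_rel !valK. Qed.

Lemma contains_matching_of_nat (j : nat) :
  matching_in nat_rel n 0 j -> contains_matching e j.
Proof.
move=> [a [b [ab_edge ab_sorted]]].
have bn (i : 'I_j) : b i < n by case: (ab_edge i (ltn_ord i)).
have an (i : 'I_j) : a i < n by case: (ab_edge i (ltn_ord i)) => _ ab /(ltn_trans ab).
exists (fun i => Ordinal (an i)), (fun i => Ordinal (bn i)); split=> [i | i i' ii'] /=.
  by have [_ ab _] := ab_edge i (ltn_ord i); rewrite -nat_relE.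
exact: ab_sorted ii' (ltn_ord i').
Qed.

Lemma ord_colorable_of_nat (m : nat) (f : nat -> nat) :
  simple_graph e -> interval_coloring nat_rel n 0 m f -> ord_colorable e m.
Proof.
move=> [e_sym e_irr] [f_mono f_proper f_lt].
apply/existsP; exists [ffun u : 'I_n => Ordinal (f_lt u)].
apply/forallP=> u; apply/forallP=> v; rewrite !ffunE -(inj_eq val_inj) /=.
apply/andP; split; first by apply/implyP => uv; apply: f_mono.
apply/implyP => euv.
case: (ltngtP u v) => [uv | vu | /val_inj uv].
- by apply: f_proper; rewrite ?nat_relE.
- by rewrite eq_sym; apply: f_proper; rewrite ?nat_relE 1?e_sym.
- by move: euv; rewrite uv (negbTE (e_irr v)).
Qed.

Lemma ord_chi_le_colorable (m : nat) : ord_colorable e m -> ord_chi e <= m.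
Proof.
rewrite /ord_chi -Order.NatOrder.minEnat => col.
have [mn|nm] := leqP m n.
  exact: (@bigmin_le_cond _ _ _ n (Ordinal (mn : m < n.+1)) _ (@nat_of_ord _) col).
apply: (leq_trans _ (ltnW nm)).
exact: (@bigmin_le_id _ _ _ _ n _ (@nat_of_ord _)).
Qed.

End OrderedGraph.

Theorem theorem2 (n : nat) (e : rel 'I_n) (k : nat) :
  simple_graph e ->
  contains_matching e k ->
  (forall j, contains_matching e j -> j <= k) ->
  ord_chi e <= 2 * k + 1.
Proof.
move=> simple_e _ k_max.
have no_big_matching : ~ matching_in (nat_rel e) n 0 k.+1.
  by move/contains_matching_of_nat/k_max; rewrite ltnn.
have [f f_col] := interval_coloring_of_no_matching no_big_matching.
rewrite addn1; apply: ord_chi_le_colorable.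
exact: ord_colorable_of_nat simple_e f_col.
Qed.
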